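(* Let $\mathbf{B}$, $\mathbf{B}^*$, $\psi=\exists u_1\ldots\exists u_n\,\theta$, $\theta'$ and $\alpha$ be as in the context, and let $f\colon\{y_0,y_1,y_2,y_3\}\to B$ be a nontrivial assignment. Then $$\mathbf{B},f\models \exists x_0\ldots\exists x_3\,\exists w_0\ldots\exists w_3\,\exists u_1\ldots\exists u_n\,(\alpha\wedge\theta')$$ if and only if $\mathbf{B}^*\models\psi$.
   Context: The bowtie poset $\mathbf{B}$ has universe $B=\{0,1,2,3\}$ with order $0<1$, $0<3$, $2<1$, $2<3$ (plus reflexivity), and no other strict comparabilities. $\mathbf{B}^*$ is the structure over the vocabulary $\{\le,c_0,c_1,c_2,c_3\}$ ($c_i$ constant symbols) whose $\{\le\}$-reduct is $\mathbf{B}$ and with $c_i^{\mathbf{B}^*}=i$ for $i\in\{0,1,2,3\}$. $\psi=\exists u_1\ldots\exists u_n\,\theta$ is a sentence over $\{\le,c_0,\ldots,c_3\}$, where $\theta$ is a conjunction of atoms $t\le t'$ with $t,t'\in\{u_1,\dots,u_n,c_0,\dots,c_3\}$; $\theta'$ is obtained from $\theta$ by replacing each constant $c_i$ by the variable $w_i$. The variables $x_i,y_i,w_i$ ($i\in\{0,1,2,3\}$) are twelve fresh variables distinct from $u_1,\dots,u_n$. For sets of variables $S,S'$, $S\le S'$ abbreviates the conjunction of all atoms $s\le s'$ with $(s,s')\in S\times S'$. The formula $\alpha$ is $$\{w_0,w_2\}\le\{w_1,w_3\}\ \wedge\ \bigwedge_{j\in\{0,2\}}\{x_j\}\le\{y_j,w_j\}\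 \wedge\ \bigwedge_{j\in\{1,3\}}\{y_j,w_j\}\le\{x_j\}.$$ An assignment $f\colon\{y_0,y_1,y_2,y_3\}\to B$ is nontrivial if $\{f(y_0),f(y_2)\}=\{0,2\}$ and $\{f(y_1),f(y_3)\}=\{1,3\}$. *)

From mathcomp Require Import all_boot.
From Stdlib Require List.
Set Implicit Arguments. Unset Strict Implicit. Unset Printing Implicit Defensive.

(* Universe B = {0,1,2,3}, represented as 'I_4. *)
Definition i0 : 'I_4 := @Ordinal 4 0 isT.
Definition i1 : 'I_4 := @Ordinal 4 1 isT.
Definition i2 : 'I_4 := @Ordinal 4 2 isT.
Definition i3 : 'I_4 := @Ordinal 4 3 isT.

Definition ble (a b : 'I_4) : bool :=
  (a == b) || ((val a, val b) \in [:: (0, 1); (0, 3); (2, 1); (2, 3)]).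

(* Terms of psi: the variables u_1..u_n (indexed by 'I_n) or constants c_0..c_3. *)
Inductive term (n : nat) : Type :=
| TVar of 'I_n
| TConst of 'I_4.

(* theta is a conjunction of atoms t <= t', given as a list of pairs (t, t'). *)
Definition formula (n : nat) := seq (term n * term n).

Definition eval_star n (u : 'I_n -> 'I_4) (t : term n) : 'I_4 :=
  match t with TVar i => u i | TConst c => c end.

(* Interpretation of a term of theta' (c_i replaced by the variable w_i). *)
Definition eval_prime n (u : 'I_n -> 'I_4) (w : 'I_4 -> 'I_4) (t : term n) : 'I_4 :=
  match t with TVar i => u i | TConst c => w c end.

Definition sat_star n (theta : formula n) (u : 'I_n -> 'I_4) : Prop :=
  forall a, List.In a theta -> ble (eval_star u a.1) (eval_star u a.2).

Definition sat_prime n (theta : formula n) (u : 'I_n -> 'I_4) (w : 'I_4 -> 'I_4) : Prop :=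
  forall a, List.In a theta -> ble (eval_prime u w a.1) (eval_prime u w a.2).

Definition models_psi n (theta : formula n) : Prop :=
  exists u : 'I_n -> 'I_4, sat_star theta u.

Definition setle (S S' : seq 'I_4) : Prop :=
  forall s s', s \in S -> s' \in S' -> ble s s'.

Definition alpha (x y w : 'I_4 -> 'I_4) : Prop :=
  [/\ setle [:: w i0; w i2] [:: w i1; w i3],
      (forall j, j \in [:: i0; i2] -> setle [:: x j] [:: y j; w j]) &
      (forall j, j \in [:: i1; i3] -> setle [:: y j; w j] [:: x j])].

Definition nontrivial (f : 'I_4 -> 'I_4) : Prop :=
  [set f i0; f i2] = [set i0; i2] /\ [set f i1; f i3] = [set i1; i3].

From mathcomp Require Import all_boot.

Set Implicit Arguments.
Unset Strict Implicit.
Unset Printing Implicit Defensive.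

(* A nontrivial f is an automorphism of the bowtie, since the order only
   compares parities: [a <= b] iff [a = b] or [a] is even and [b] odd.  The
   formula alpha forces [w = f]: each [w_j] lies between [f j] and the two
   values [f] takes on the other parity class, and an element below (above)
   two distinct elements is even (odd).  Hence B, f satisfies the existential
   formula iff the f-image of a witness for psi in B^* satisfies theta'. *)

Lemma bleE (a b : 'I_4) : ble a b = (a == b) || (~~ odd a && odd b).
Proof. by case: a => [[|[|[|[|a]]]] Ha]; case: b => [[|[|[|[|b]]]] Hb]. Qed.

Lemma ble_refl (a : 'I_4) : ble a a.
Proof. by rewrite bleE eqxx. Qed.

Lemma ble_trans (b a c : 'I_4) : ble a b -> ble b c -> ble a c.
Proof.
rewrite !bleE => /orP[/eqP -> //|/andP[ea ob]] /orP[/eqP <-|/andP[eb _]].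
  by rewrite ea ob orbT.
by rewrite ob in eb.
Qed.

Lemma ble_even_min (a b : 'I_4) : ~~ odd b -> ble a b -> a = b.
Proof. by move=> eb; rewrite bleE (negbTE eb) andbF orbF => /eqP. Qed.

Lemma ble_odd_max (a b : 'I_4) : odd a -> ble a b -> b = a.
Proof. by move=> oa; rewrite bleE oa /= orbF => /eqP. Qed.

Lemma ble_lower_bound_even (a b c : 'I_4) :
  ble a b -> ble a c -> b != c -> ~~ odd a.
Proof.
move=> ab ac; apply: contraTN => oa.
by rewrite (ble_odd_max oa ab) (ble_odd_max oa ac) eqxx.
Qed.

Lemma ble_upper_bound_odd (a b c : 'I_4) :
  ble a c -> ble b c -> a != b -> odd c.
Proof.
move=> ac bc; apply: contraTT => ec.
by rewrite (ble_even_min ec ac) (ble_even_min ec bc) eqxx.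
Qed.

Lemma ble_parity_inj (g : 'I_4 -> 'I_4) :
  injective g -> (forall a, odd (g a) = odd a) ->
  forall a b, ble (g a) (g b) = ble a b.
Proof. by move=> ginj godd a b; rewrite !bleE !godd (inj_eq ginj). Qed.

Lemma ord4P (a : 'I_4) : [\/ a = i0, a = i1, a = i2 | a = i3].
Proof.
case: a => [[|[|[|[|a]]]] Ha] //.
- by constructor 1; apply: val_inj.
- by constructor 2; apply: val_inj.
- by constructor 3; apply: val_inj.
- by constructor 4; apply: val_inj.
Qed.

Section Nontrivial.

Variable f : 'I_4 -> 'I_4.
Hypothesis ntf : nontrivial f.

Lemma nontrivial_odd (a : 'I_4) : odd (f a) = odd a.
Proof.
have [E02 E13] := ntf.
have in02 j : j \in [set f i0; f i2] -> odd j = false.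
  by rewrite E02 !inE => /orP[] /eqP ->.
have in13 j : j \in [set f i1; f i3] -> odd j = true.
  by rewrite E13 !inE => /orP[] /eqP ->.
by case: (ord4P a) => ->;
  [rewrite in02 ?set21 | rewrite in13 ?set21 | rewrite in02 ?set22 | rewrite in13 ?set22].
Qed.

Lemma nontrivial_inj : injective f.
Proof.
have [E02 E13] := ntf.
have d02 : f i0 != f i2.
  by have := cards2 (f i0) (f i2); rewrite E02 cards2; case: (f i0 != f i2).
have d13 : f i1 != f i3.
  by have := cards2 (f i1) (f i3); rewrite E13 cards2; case: (f i1 != f i3).
have same_parity a b : f a = f b -> odd a = odd b.
  by move=> fab; rewrite -(nontrivial_odd a) -(nontrivial_odd b) fab.
move=> a b fab; have := same_parity _ _ fab.
case: (ord4P a) (ord4P b) fab => -> [] -> // fab _;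
  by [rewrite fab eqxx in d02 d13 | rewrite -fab eqxx in d02 d13].
Qed.

Lemma nontrivial_ble (a b : 'I_4) : ble (f a) (f b) = ble a b.
Proof. exact: ble_parity_inj nontrivial_inj nontrivial_odd a b. Qed.

Lemma nontrivial_alpha : alpha f f f.
Proof.
split=> [s s'|j _ s s'|j _ s s'].
- by rewrite !inE => /orP[] /eqP -> /orP[] /eqP ->;
    rewrite bleE !nontrivial_odd orbT.
- by rewrite !inE => /eqP -> /orP[] /eqP ->; apply: ble_refl.
- by rewrite !inE => /orP[] /eqP -> /eqP ->; apply: ble_refl.
Qed.

Lemma alpha_nontrivial_eq (x w : 'I_4 -> 'I_4) : alpha x f w -> w =1 f.
Proof.
move=> [Hw Hlo Hhi].
have fneq a b : a != b -> f a != f b by rewrite (inj_eq nontrivial_inj).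
have lo j : j \in [:: i0; i2] -> ble (f j) (w j).
  move=> jE; have [fx fw] := (Hlo j jE (x j) (f j), Hlo j jE (x j) (w j)).
  have ej : ~~ odd (f j) by move: jE; rewrite nontrivial_odd !inE => /orP[] /eqP ->.
  rewrite -(ble_even_min ej (fx (mem_head _ _) (mem_head _ _))).
  by apply: fw; rewrite !inE eqxx ?orbT.
have hi j : j \in [:: i1; i3] -> ble (w j) (f j).
  move=> jE; have [fx wx] := (Hhi j jE (f j) (x j), Hhi j jE (w j) (x j)).
  have oj : odd (f j) by move: jE; rewrite nontrivial_odd !inE => /orP[] /eqP ->.
  rewrite -(ble_odd_max oj (fx (mem_head _ _) (mem_head _ _))).
  by apply: wx; rewrite !inE eqxx ?orbT.
have ww a b : a \in [:: i0; i2] -> b \in [:: i1; i3] -> ble (w a) (w b).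
  by move=> aE bE; apply: Hw (map_f w aE) (map_f w bE).
have w_even a : a \in [:: i0; i2] -> w a = f a.
  move=> aE; apply/esym/ble_even_min; last exact: lo.
  apply: (ble_lower_bound_even (b := f i1) (c := f i3)); last exact: fneq.
    exact: ble_trans (ww a i1 aE isT) (hi i1 isT).
  exact: ble_trans (ww a i3 aE isT) (hi i3 isT).
have w_odd b : b \in [:: i1; i3] -> w b = f b.
  move=> bE; apply/esym/ble_odd_max; last exact: hi.
  apply: (ble_upper_bound_odd (a := f i0) (b := f i2)); last exact: fneq.
    exact: ble_trans (lo i0 isT) (ww i0 b isT bE).
  exact: ble_trans (lo i2 isT) (ww i2 b isT bE).
by move=> c; case: (ord4P c) => ->;
  [exact: w_even | exact: w_odd | exact: w_even | exact: w_odd].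
Qed.

End Nontrivial.

Lemma sat_prime_image n (theta : formula n) (g : 'I_4 -> 'I_4)
    (u : 'I_n -> 'I_4) (u' : 'I_n -> 'I_4) (w : 'I_4 -> 'I_4) :
  (forall a b, ble (g a) (g b) = ble a b) ->
  u' =1 g \o u -> w =1 g ->
  sat_prime theta u' w <-> sat_star theta u.
Proof.
move=> gble uu' wg.
have evalE t : eval_prime u' w t = g (eval_star u t).
  by case: t => [i|c] /=; [apply: uu' | apply: wg].
by split=> sat a /sat; rewrite !evalE gble.
Qed.

Theorem claim4 (n : nat) (theta : formula n) (f : 'I_4 -> 'I_4) :
  nontrivial f ->
  ((exists x w : 'I_4 -> 'I_4, exists u : 'I_n -> 'I_4,
      alpha x f w /\ sat_prime theta u w)
   <-> models_psi theta).
Proof.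
move=> ntf; have fble := nontrivial_ble ntf; split.
- case=> x [w [u [/(alpha_nontrivial_eq ntf) wf sat]]].
  have uE : u =1 f \o (finv f \o u).
    by move=> i; rewrite /= f_finv //; apply: nontrivial_inj.
  by exists (finv f \o u); apply/(sat_prime_image theta fble uE wf).
- case=> u sat; exists f, f, (f \o u); split; first exact: nontrivial_alpha.
  exact/(sat_prime_image theta fble).
Qed.
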